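(* There is an absolute constant $C$ such that the following holds. Let $(\mathcal T,\{B_i\})$ be a tree decomposition of a graph $G$, rooted at $r$, such that every node has level at most $d$, and let $\lambda\in\{1,\dots,d\}$. Define new bags $B'_v := \bigcup_{w\in \mathcal T_{v\leftrightarrow\sigma(v)}} B_w$ for $v\neq r$ and $B'_r:=B_r$. Then $(\mathcal T,\{B'_v\})$ has combinatorial diameter at most $C\cdot d/\lambda$.
   Context: Tree decomposition: tree with bags covering vertices and edges of $G$, each vertex's bags forming a connected subtree. $\mathcal T_{x\leftrightarrow y}$ is the set of nodes on the unique $x$–$y$ path in $\mathcal T$. The level $\ell(v)$ of a node is the number of edges on $\mathcal T_{v\leftrightarrow r}$. A node is a synchronization node if its level is a multiple of $\lambda$. For $v\neq r$, the synchronization ancestor $\sigma(v)$ is the first synchronization node on the path from $v$ to $r$, excluding $v$ itself. Combinatorial diameter: for nodes $s,t$ consider the path $\mathcal T_{s\leftrightarrow t}$. A non-endpoint node $v$ of the current path, with its two neighbours on the current path labelled $u,w$ (in some order), is redundant if $B_v\cap B_w\subseteq B_u$; bypassing $v$ deletes $v$ and joins $u,w$. The path has combinatorial length at most $\ell$ if repeatedly bypassing redundant nodes (redundancy evaluated in the current path) yields a path with at most $\ell$ edges. The combinatorial diameter is the minimum $\delta$ such that every path $\mathcal T_{u\leftrightarrow v}$ has combinatorial length at most $\delta$ (with respect to the given bags). *)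

From mathcomp Require Import all_boot.
From Stdlib Require Import Relations.
Set Implicit Arguments. Unset Strict Implicit. Unset Printing Implicit Defensive.

(* Rooted trees are given by a parent function [par : N -> N] on a finite
   node type [N] with root [r]:  par r = r  and every node reaches r. *)
Definition rooted_tree (N : finType) (par : N -> N) (r : N) : Prop :=
  par r = r /\ forall v : N, r \in traject par v #|N|.

Definition tadj (N : finType) (par : N -> N) : rel N :=
  fun u w => (u != w) && ((par u == w) || (par w == u)).

(* [p] is the node sequence of the (unique) path T_{s<->t} *)
Definition tree_path (N : finType) (par : N -> N) (s t : N) (p : seq N) : Prop :=
  exists p', [/\ p = s :: p', path (tadj par) s p', last s p' = t & uniq p].

(* ancestors of v: v, par v, par (par v), ... (r repeated at the end) *)
Definition anc (N : finType) (par : N -> N) (v : N) : seq N :=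
  traject par v #|N|.

Definition level (N : finType) (par : N -> N) (r : N) (v : N) : nat :=
  index r (anc par v).

(* index (in anc v) of the synchronization ancestor sigma(v): the first node
   after v on the path to r whose level is a multiple of lambda *)
Definition sigma_idx (N : finType) (par : N -> N) (r : N) (lam : nat) (v : N) : nat :=
  (find (fun w => lam %| level par r w) (behead (anc par v))).+1.

Definition sync_anc (N : finType) (par : N -> N) (r : N) (lam : nat) (v : N) : N :=
  nth v (anc par v) (sigma_idx par r lam v).

(* the nodes of T_{v <-> sigma(v)} *)
Definition sigma_path (N : finType) (par : N -> N) (r : N) (lam : nat) (v : N) : seq N :=
  take (sigma_idx par r lam v).+1 (anc par v).

Definition new_bags (N V : finType) (par : N -> N) (r : N) (lam : nat)
    (B : N -> {set V}) (v : N) : {set V} :=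
  if v == r then B r else \bigcup_(w <- sigma_path par r lam v) B w.

Definition tree_decomposition (N V : finType) (par : N -> N) (gadj : rel V)
    (B : N -> {set V}) : Prop :=
  [/\ forall x : V, exists i : N, x \in B i,
      forall x y : V, gadj x y -> exists i : N, (x \in B i) && (y \in B i)
    & forall x : V, forall u w : N, x \in B u -> x \in B w ->
        connect [rel a b | tadj par a b && (x \in B a) && (x \in B b)] u w].

Inductive bypass (N V : finType) (B : N -> {set V}) : seq N -> seq N -> Prop :=
  | Bypass (a b : seq N) (u v w : N) :
      (B v :&: B w \subset B u) || (B v :&: B u \subset B w) ->
      bypass B (a ++ [:: u; v; w] ++ b) (a ++ [:: u; w] ++ b).

Definition bypass_star (N V : finType) (B : N -> {set V}) : seq N -> seq N -> Prop :=
  clos_refl_trans (seq N) (@bypass N V B).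

Definition comb_length_le (N V : finType) (B : N -> {set V}) (p : seq N) (l : nat) : Prop :=
  exists q, clos_refl_trans (seq N) (@bypass N V B) p q /\ (size q).-1 <= l.

Definition comb_diam_le (N V : finType) (par : N -> N) (B : N -> {set V}) (delta : nat) : Prop :=
  forall s t p, tree_path par s t p -> comb_length_le B p delta.

From mathcomp Require Import all_boot.
From Stdlib Require Import Relations.
From mathcomp Require Import zify.
Set Implicit Arguments. Unset Strict Implicit. Unset Printing Implicit Defensive.

(* A path of the tree climbs from [s] to a highest node and then descends to
   [t].  On the ascending part, if the parent [par u] of a node [u] is not a
   synchronization node, then T_{par u <-> sigma (par u)} is contained in
   T_{u <-> sigma u}, so the new bag of [par u] is contained in that of [u] and
   [par u] can be bypassed.  Only synchronization nodes survive, and k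
   consecutive levels contain at most k/lambda + 1 multiples of lambda; the
   descending part is symmetric.  This leaves at most (2d + 4 lambda)/lambda
   <= 6d/lambda edges. *)

Lemma find_trajectP (T : Type) (f : T -> T) (a : pred T) x n i :
  i < n -> a (iter i f x) ->
  let k := find a (traject f x n) in
  [/\ k <= i, a (iter k f x) & forall j, j < k -> ~~ a (iter j f x)].
Proof.
move=> lt_i_n a_i k; have k_le_i : k <= i.
  by rewrite leqNgt; apply/negP => /(before_find x); rewrite nth_traject ?a_i.
have lt_k_n := leq_ltn_trans k_le_i lt_i_n.
split=> //; first by rewrite -(nth_traject f lt_k_n) nth_find // has_find size_traject.
move=> j lt_j_k; have := before_find x lt_j_k.
by rewrite nth_traject ?(ltn_trans lt_j_k) // => ->.
Qed.

Lemma spaced_path_last d x s :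
  path (fun i j => i + d <= j) x s -> size s * d + x <= last x s.
Proof.
elim: s x => [|y s IHs] x //= /andP[xy /IHs]; rewrite mulSn; nia.
Qed.

Lemma count_dvdn_iota d a n : 0 < d -> count (dvdn d) (iota a n) * d <= n + d.
Proof.
move=> d_gt0; rewrite -size_filter.
have : sorted (fun i j => i + d <= j) (filter (dvdn d) (iota a n)).
  apply: (@sub_in_sorted _ (dvdn d) ltn); last first.
  - by apply: sorted_filter; [exact: ltn_trans | exact: iota_ltn_sorted].
  - by apply/allP => i; rewrite mem_filter => /andP[].
  move=> i j d_i d_j lt_ij; have := dvdn_leq _ (dvdn_sub d_j d_i).
  by rewrite subn_gt0 => /(_ lt_ij); lia.
have mem_s i : i \in filter (dvdn d) (iota a n) -> a <= i < a + n.
  by rewrite mem_filter mem_iota => /andP[].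
case: filter mem_s => [|y s] //= mem_s /spaced_path_last.
have /andP[a_le_y _] := mem_s y (mem_head _ _).
have /andP[_ last_lt] := mem_s _ (mem_last y s).
by move: (last y s) last_lt => L; rewrite mulSn; clear mem_s; lia.
Qed.

Section Bypass.
Variables (N V : finType) (B : N -> {set V}).

Lemma bypass_rev p q : bypass B p q -> bypass B (rev p) (rev q).
Proof.
case=> a b u v w redundant; rewrite !rev_cat /= !rev_cons -!cats1 -!catA /=.
by apply: Bypass; rewrite orbC.
Qed.

Lemma bypass_star_rev p q : bypass_star B p q -> bypass_star B (rev p) (rev q).
Proof.
elim=> [x y /bypass_rev|x|x y z _ xy _ yz]; [exact: rt_step|exact: rt_refl|].
exact: rt_trans xy yz.
Qed.

(* A node [v] whose bag lies in the bag of its predecessor [u] is redundant,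
   as [B v :&: B w \subset B v \subset B u]. *)
Lemma bypass_star_filter (keep : pred N) (m : seq N) x pre z suf :
  path (fun u v => keep v || (B v \subset B u)) x m ->
  bypass_star B (pre ++ x :: m ++ z :: suf) (pre ++ x :: filter keep m ++ z :: suf).
Proof.
elim: m x pre => [|v m IHm] x pre /=; first by move=> _; apply: rt_refl.
case/andP=> xv vm; case keep_v: (keep v).
  by have := IHm v (rcons pre x) vm; rewrite !cat_rcons.
rewrite keep_v /= in xv.
apply: (@rt_trans _ _ _ (pre ++ x :: m ++ z :: suf)).
  apply: rt_step; have xv' := subset_trans (subsetIl _ _) xv.
  case: m {IHm vm} => [|w m].
  - by apply: (Bypass pre suf); rewrite xv'.
  - by apply: (Bypass pre (m ++ z :: suf)); rewrite xv'.
apply: IHm; case: m vm => [|w m] //= /andP[vw ->]; rewrite andbT.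
by case: (keep w) vw => //= /subset_trans; apply.
Qed.

End Bypass.

Section Levels.
Variables (N : finType) (par : N -> N) (r : N).
Hypothesis tree : rooted_tree par r.

Local Notation level := (level par r).

Lemma level_lt_card v : level v < #|N|.
Proof.
by case: tree => _ /(_ v); rewrite -[X in _ < X](size_traject par v) -index_mem.
Qed.

Lemma iter_level v : iter (level v) par v = r.
Proof.
by case: tree => _ /(_ v) r_anc; rewrite -(nth_traject par (level_lt_card v) v) nth_index.
Qed.

Lemma root_notin_traject_level v : r \notin traject par v (level v).
Proof.
case: tree => _ /(_ v) r_anc.
by rewrite -(@take_traject _ _ #|N|) ?in_take ?ltnn // ltnW ?level_lt_card.
Qed.

Lemma level_eq v i : iter i par v = r -> r \notin traject par v i -> level v = i.
Proof.
move=> iter_i r_notin; case: tree => _ /(_ v) r_anc.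
have lt_i : i < #|N|.
  rewrite ltnNge; apply: contra r_notin => le_n.
  by rewrite -(subnKC le_n) trajectD mem_cat r_anc.
rewrite /level /anc -(subnKC (ltnW lt_i)) trajectD iter_i.
have : 0 < #|N| - i by rewrite subn_gt0.
by case: (#|N| - i) => //= m _; rewrite index_pivot ?size_traject.
Qed.

Lemma level_root : level r = 0.
Proof. exact: level_eq. Qed.

Lemma level_gt0 v : v != r -> 0 < level v.
Proof.
apply: contraR; rewrite -eqn0Ngt => /eqP lev0.
by rewrite -[v]/(iter 0 par v) -lev0 iter_level.
Qed.

Lemma level_iter v j : j <= level v -> level (iter j par v) = level v - j.
Proof.
move=> le_j; apply: level_eq; first by rewrite -iterD subnK ?iter_level.
have := root_notin_traject_level v.
by rewrite -{1}(subnKC le_j) trajectD mem_cat negb_or => /andP[].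
Qed.

Lemma uniq_traject_leq_level v k : uniq (traject par v k.+1) -> k <= level v.
Proof.
rewrite looping_uniq leqNgt; apply: contra => lt_lev; apply/trajectP.
exists (level v) => //; rewrite iter_level -(subnK (ltnW lt_lev)) iterD iter_level.
by case: tree => par_r _; rewrite iter_fix.
Qed.

Lemma rev_map_level_traject v k :
  k <= level v -> rev (map level (traject par v k)) = iota (level v - k).+1 k.
Proof.
elim: k => [|k IHk] lt_k //; rewrite trajectSr map_rcons rev_rcons IHk; last exact: ltnW.
by rewrite level_iter ?subnSK // ltnW.
Qed.

End Levels.

Section Synchronization.
Variables (N : finType) (par : N -> N) (r : N) (lam : nat).
Hypothesis tree : rooted_tree par r.

Local Notation level := (level par r).
Local Notation sigma_idx := (sigma_idx par r lam).

Definition sync_node v := lam %| level v.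

Lemma sync_root : sync_node r.
Proof. by rewrite /sync_node (level_root tree) dvdn0. Qed.

Lemma sigma_idxP v : v != r ->
  [/\ 0 < sigma_idx v <= level v, sync_node (iter (sigma_idx v) par v)
    & forall j, 0 < j < sigma_idx v -> ~~ sync_node (iter j par v)].
Proof.
move=> v_ne_r; have lev_gt0 := level_gt0 tree v_ne_r.
have := level_lt_card tree v; rewrite /sigma_idx /anc.
case: #|N| => [|n] //; rewrite ltnS [behead _]/= => lt_lev.
have [||k_le sync_k before_k] := @find_trajectP _ par sync_node (par v) n (level v).-1.
- by rewrite -ltnS prednK.
- by rewrite -iterSr prednK // iter_level ?sync_root.
split.
- by rewrite ltn0Sn -(prednK lev_gt0) ltnS.
- by rewrite iterSr.
- by case=> [|j] /andP[] // _; rewrite ltnS iterSr; apply: before_k.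
Qed.

Lemma sigma_pathE v :
  v != r -> sigma_path par r lam v = traject par v (sigma_idx v).+1.
Proof.
move=> /sigma_idxP[/andP[_ le_lev] _ _]; rewrite /sigma_path /anc take_traject //.
exact: leq_ltn_trans le_lev (level_lt_card tree v).
Qed.

(* Below a non-synchronization parent, [sigma u] lies at or above
   [sigma (par u)], hence T_{par u <-> sigma (par u)} is a subpath of
   T_{u <-> sigma u}. *)
Lemma new_bags_par_sub (V : finType) (B : N -> {set V}) u : ~~ sync_node (par u) ->
  new_bags par r lam B (par u) \subset new_bags par r lam B u.
Proof.
move=> nsync_pu.
have pu_ne_r : par u != r by apply: contraNneq nsync_pu => ->; apply: sync_root.
have u_ne_r : u != r by apply: contraNneq pu_ne_r => ->; case: tree => ->.
rewrite /new_bags (negbTE pu_ne_r) (negbTE u_ne_r) !sigma_pathE // !bigcup_seq.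
case: (sigma_idxP pu_ne_r) => /andP[mv_gt0 _] _ before_v.
case: (sigma_idxP u_ne_r) => /andP[mu_gt0 _] sync_u _.
have mu_gt1 : 1 < sigma_idx u.
  rewrite ltn_neqAle mu_gt0 andbT; apply: contraNneq nsync_pu => mu1.
  by rewrite -[par u]/(iter 1 par u) mu1.
have lt_mv_mu : sigma_idx (par u) < sigma_idx u.
  rewrite ltnNge; apply/negP => le_mu_mv.
  suff /before_v : 0 < (sigma_idx u).-1 < sigma_idx (par u).
    by rewrite -iterSr prednK ?sync_u // ltnW.
  by apply/andP; split; lia.
apply/bigcupsP => w w_in; apply: bigcup_sup.
by rewrite trajectS inE -(subnKC lt_mv_mu) trajectD mem_cat w_in !orbT.
Qed.

Lemma count_sync_traject v k : 0 < lam -> k <= level v ->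
  count sync_node (traject par v k) * lam <= k + lam.
Proof.
move=> lam_gt0 le_k.
have -> : count sync_node (traject par v k) = count (dvdn lam) (map level (traject par v k)).
  by rewrite count_map.
by rewrite -count_rev (rev_map_level_traject tree le_k) count_dvdn_iota.
Qed.

End Synchronization.

Lemma tree_path_peak (N : finType) (par : N -> N) x p :
  path (tadj par) x p -> uniq (x :: p) ->
  exists k l t, x :: p = traject par x k ++ iter k par x :: rev (traject par t l)
                /\ iter l par t = iter k par x.
Proof.
elim: p x => [|y p IHp] x; first by exists 0, 0, x.
rewrite [path _ _ _]/= cons_uniq => /andP[/andP[_ /orP[/eqP up|/eqP down]] yp].
  case/andP=> _ /(IHp y yp)[k [l [t [-> top]]]].
  by exists k.+1, l, t; rewrite trajectS iterSr up top.
case/andP=> x_notin /(IHp y yp)[[|k] [l [t [yp_eq top]]]].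
  exists 0, l.+1, t; rewrite trajectSr rev_rcons /= top -down.
  by case: yp_eq => <-.
by move: x_notin; rewrite yp_eq -down; case: k {yp_eq top} => [|k]; rewrite !inE ?eqxx ?orbT.
Qed.

Section Reduction.
Variables (N V : finType) (par : N -> N) (r : N) (lam : nat) (B : N -> {set V}).
Hypotheses (tree : rooted_tree par r) (lam_gt0 : 0 < lam).

Local Notation B' := (new_bags par r lam B).

Lemma bypass_star_ascent s k z suf : k <= level par r s ->
  exists U, bypass_star B' (traject par s k ++ z :: suf) (U ++ z :: suf)
            /\ size U * lam <= k + 2 * lam.
Proof.
case: k => [|k] le_k; first by exists [::]; split; [apply: rt_refl|].
exists (s :: filter (sync_node par r lam) (traject par (par s) k)); split.
  apply: (@bypass_star_filter _ _ _ _ _ _ [::]).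
  apply: sub_path (fpath_traject par s k) => u _ /eqP <-.
  by case: (boolP (sync_node _ _ _ _)) => //= /new_bags_par_sub ->.
have le_k' : k <= level par r (par s).
  by rewrite -[par s]/(iter 1 par s) (level_iter tree); lia.
by rewrite /= size_filter mulSn; have := count_sync_traject tree lam_gt0 le_k'; lia.
Qed.

Lemma bypass_star_descent t l z pre : l <= level par r t ->
  exists D, bypass_star B' (pre ++ z :: rev (traject par t l)) (pre ++ z :: D)
            /\ size D * lam <= l + 2 * lam.
Proof.
move=> /(bypass_star_ascent z (rev pre))[U [/bypass_star_rev reduce size_U]].
exists (rev U); rewrite size_rev; split=> //.
by move: reduce; rewrite !rev_cat !rev_cons revK -!cats1 -!catA.
Qed.

End Reduction.

(* The bags [B] need not form a tree decomposition: the bound holds for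
   arbitrary bags. *)
Theorem lemma4p1 :
  exists C : nat,
  forall (V N : finType) (gadj : rel V) (par : N -> N) (r : N)
         (B : N -> {set V}) (d lam : nat),
    rooted_tree par r ->
    tree_decomposition par gadj B ->
    (forall v : N, level par r v <= d) ->
    0 < lam <= d ->
    forall (s t : N) (p : seq N), tree_path par s t p ->
      exists q, bypass_star (new_bags par r lam B) p q
                /\ (size q).-1 * lam <= C * d.
Proof.
exists 6 => V N gadj par r B d lam tree _ le_d /andP[lam_gt0 lam_le] s t p.
case=> p' [-> s_p' _ uniq_p].
have [k [l [t' [p_eq top]]]] := tree_path_peak s_p' uniq_p.
rewrite p_eq in uniq_p *.
have le_k : k <= level par r s.
  apply: (uniq_traject_leq_level tree); rewrite trajectSr.
  by move: uniq_p; rewrite -cat_rcons cat_uniq => /andP[].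
have le_l : l <= level par r t'.
  apply: (uniq_traject_leq_level tree); rewrite -rev_uniq trajectSr rev_rcons top.
  by move: uniq_p; rewrite cat_uniq => /and3P[].
have [U [reduce_U size_U]] :=
  bypass_star_ascent B tree lam_gt0 (iter k par s) (rev (traject par t' l)) le_k.
have [D [reduce_D size_D]] :=
  bypass_star_descent B tree lam_gt0 (iter k par s) U le_l.
exists (U ++ iter k par s :: D); split; first exact: rt_trans reduce_U reduce_D.
rewrite size_cat /= addnS /= mulnDl; have := le_d s; have := le_d t'; lia.
Qed.
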